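(* Let $j\in\{2,3,4,5,6\}$, $\mathbf c\in\mathbf C^j_{\rm aut}$ and $\mathbf m\in\mathbf M_{\mathbf c}$. (1) If $f\in\operatorname{Hom}(H_{\mathbf m},\mathcal Z(H_{\mathbf m}))$ satisfies $\operatorname{Im}(f)\subseteq\operatorname{Ker}(f)$, then the map $g^1_f:H_{\mathbf m}\to H_{\mathbf m}$, $g^1_f(x)=x\cdot f(x)$, is an automorphism of $H_{\mathbf m}$. (2) Let $n>0$, $\bar s\in\mathbb Z^n$, $\bar b\in(L_{\mathbf c})^n$, $\pi\in\operatorname{End}(N_{\mathbf c})$, and let $g\in\mathcal A^{\bar s,\bar b}_{\mathbf m,\pi}$. Then a map $h:H_{\mathbf m}\to H_{\mathbf m}$ belongs to $\mathcal A^{\bar s,\bar b}_{\mathbf m,\pi}$ if and only if there is $f\in\operatorname{Hom}(H_{\mathbf m},\mathcal Z(H_{\mathbf m}))$ with $\mathcal Z(H_{\mathbf m})\subseteq\operatorname{Ker}(f)$ such that $h(x)=g(x)\cdot f(x)$ for all $x\in H_{\mathbf m}$.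
   Context: Groups are not assumed abelian; $\mathcal Z(H)$ is the center of $H$; $J_p$ is the additive group of $p$-adic integers. $\mathbf C^2_{\rm aut}$: tuples $\mathbf c=(L_{\mathbf c},N_{\mathbf c},H_{\mathbf c},h_{\mathbf c},h^*_{\mathbf c},F_{\mathbf c},(Q^{\bar s}_{\mathbf c}))$ with $L_{\mathbf c},H_{\mathbf c}$ groups, $F_{\mathbf c}:L_{\mathbf c}\to\operatorname{Aut}(H_{\mathbf c})$ an injective homomorphism ($F^\ell_{\mathbf c}:=F_{\mathbf c}(\ell)$), $N_{\mathbf c}\trianglelefteq L_{\mathbf c}$, $h_{\mathbf c}:H_{\mathbf c}\to N_{\mathbf c}$ an epimorphism with kernel $\mathcal Z(H_{\mathbf c})$ such that $F_{\mathbf c}(h_{\mathbf c}(a))$ is $x\mapsto axa^{-1}$ for all $a\in H_{\mathbf c}$, $h^*_{\mathbf c}:N_{\mathbf c}\to H_{\mathbf c}$ a map with $h_{\mathbf c}\circ h^*_{\mathbf c}=\mathrm{id}$, and $(b_1,\dots,b_n)\in Q^{\bar s}_{\mathbf c}$ iff $\sum_is_iF^{b_i}_{\mathbf c}\restriction\mathcal Z(H_{\mathbf c})=0$. $\mathbf C^3_{\rm aut}$: add $H^*_{\mathbf c},\mathbb P_{\mathbf c}$ with $\mathcal Z(H_{\mathbf c})$ reduced; $H^*_{\mathbf c}\le H_{\mathbf c}$, $H_{\mathbf c}=\bigcup_{x\in\mathcal Z(H_{\mathbf c})}H^*_{\mathbf c}x$, $\mathcal Z(H^*_{\mathbf c})=\mathcal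 Z(H_{\mathbf c})\cap H^*_{\mathbf c}$; $\mathbb P_{\mathbf c}$ = set of primes $p$ such that $\mathcal Z(H_{\mathbf c})$ has a nonzero element of $p$-power order (then so does $\mathcal Z(H^*_{\mathbf c})$) or $J_p$ embeds in $\mathcal Z(H_{\mathbf c})$ (then $J_p$ embeds in $\mathcal Z(H^*_{\mathbf c})$). $\mathbf C^4_{\rm aut}$: $\mathbf c\in\mathbf C^3_{\rm aut}$ with $\mathcal Z(H_{\mathbf c})/\mathcal Z(H^*_{\mathbf c})$ torsion-free and $p$-divisible for all primes $p\notin\mathbb P_{\mathbf c}$. $\mathbf C^5_{\rm aut}$: pairs $(\mathbf c,\mathbf g)$, $\mathbf c\in\mathbf C^4_{\rm aut}$, $\mathbf g=(\mathbb G_{\mathbf g},(F^\ell_{\mathbf g})_{\ell\in L_{\mathbf c}})$, $\mathbb G_{\mathbf g}$ reduced torsion-free abelian with no $J_p$ embedded, $F^\ell_{\mathbf g}\in\operatorname{Aut}(\mathbb G_{\mathbf g})$, $(b_i)\in Q^{\bar s}_{\mathbf c}\Rightarrow\sum s_iF^{b_i}_{\mathbf g}=0$. $\mathbf C^6_{\rm aut}$: pairs $(\mathbf c,\mathcal G)$, $\mathbf c\in\mathbf C^4_{\rm aut}$, $\mathcal G$ a nonempty set of $\mathbf g$ with $(\mathbf c,\mathbf g)\in\mathbf C^5_{\rm aut}$, closed under restriction to $\mathrm{cl}\{x\}$ (smallest pure subgroup of $\mathbb G_{\mathbf g}$ containing $x$ closed under all $F^\ell_{\mathbf g}$), and containing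 up to isomorphism every such one-generated $\mathbf g$ embeddable compatibly into $(\mathcal Z(H_{\mathbf c}),(F^\ell_{\mathbf c})_\ell)$. For $j\in\{5,6\}$ the members are pairs and $L_{\mathbf c},H_{\mathbf c},\dots$ denote components of the underlying tuple. $\mathbf M_{\mathbf c}$: the class of $\mathbf m\in\mathbf C^j_{\rm aut}$ with $L_{\mathbf m}=L_{\mathbf c}$, $N_{\mathbf m}=N_{\mathbf c}$, $H_{\mathbf c}\subseteq H_{\mathbf m}$, $h_{\mathbf c}\subseteq h_{\mathbf m}$, $h^*_{\mathbf m}=h^*_{\mathbf c}$, $F^\ell_{\mathbf c}\subseteq F^\ell_{\mathbf m}$ for all $\ell$, $Q^{\bar s}_{\mathbf m}=Q^{\bar s}_{\mathbf c}$, $H_{\mathbf m}$ generated by $\mathcal Z(H_{\mathbf m})\cup H_{\mathbf c}$, $\mathcal Z(H_{\mathbf c})=\mathcal Z(H_{\mathbf m})\cap H_{\mathbf c}$; if $j\ge3$ also $\mathbb P_{\mathbf m}=\mathbb P_{\mathbf c}$, $H^*_{\mathbf m}=H^*_{\mathbf c}$; if $j=5$ the same $\mathbf g$; if $j=6$ the same $\mathcal G$. $\mathcal A^{\bar s,\bar b}_{\mathbf m,\pi}$: with $F^{\bar s,\bar b}_{\mathbf m}:=\sum_{i=1}^ns_i(F^{b_i}_{\mathbf m}\restriction\mathcal Z(H_{\mathbf m}))\in\operatorname{End}(\mathcal Z(H_{\mathbf m}))$ and $h'^*:=h^*_{\mathbf c}\circ\pi$, it is the set of all $g\in\operatorname{End}(H_{\mathbf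 m})$ with $g\restriction\mathcal Z(H_{\mathbf m})=F^{\bar s,\bar b}_{\mathbf m}$ and $g(x)\in h'^*(h_{\mathbf m}(x))\cdot\mathcal Z(H_{\mathbf m})$ for all $x\in H_{\mathbf m}$. *)

(* we use mathcomp's [int] for the integer coefficients
   and ['I_n] for index sets.  Groups are possibly infinite, so they are
   encoded as an explicit record of carrier + operations + axioms. *)
From mathcomp Require Import all_boot all_algebra.
Set Implicit Arguments. Unset Strict Implicit. Unset Printing Implicit Defensive.

Record Grp := MkGrp {
  gcar :> Type;
  gmul : gcar -> gcar -> gcar;
  gone : gcar;
  ginv : gcar -> gcar;
  gmulA : forall x y z, gmul x (gmul y z) = gmul (gmul x y) z;
  gmul1 : forall x, gmul gone x = x;
  gmulV : forall x, gmul (ginv x) x = gone }.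

Arguments gmul {g}. Arguments gone {g}. Arguments ginv {g}.

Definition is_hom (G K : Grp) (f : G -> K) : Prop :=
  forall x y : G, f (gmul x y) = gmul (f x) (f y).

Definition is_aut (G : Grp) (f : G -> G) : Prop := is_hom f /\ bijective f.

Definition central (G : Grp) (x : G) : Prop := forall y : G, gmul x y = gmul y x.

Definition zpow (G : Grp) (x : G) (k : int) : G :=
  match k with
  | Posz n => iter n (gmul x) gone
  | Negz n => ginv (iter n.+1 (gmul x) gone)
  end.

Definition is_subgroup (G : Grp) (S : G -> Prop) : Prop :=
  S gone /\ (forall x y, S x -> S y -> S (gmul x y)) /\ (forall x, S x -> S (ginv x)).
Definition is_normal (G : Grp) (N : G -> Prop) : Prop :=
  is_subgroup N /\ forall x y : G, N x -> N (gmul (gmul y x) (ginv y)).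

Definition gen_by (G : Grp) (A : G -> Prop) (x : G) : Prop :=
  forall S : G -> Prop, is_subgroup S -> (forall a, A a -> S a) -> S x.

(* endomorphism of the subgroup N (values of pi outside N are irrelevant) *)
Definition is_endo_on (G : Grp) (N : G -> Prop) (pi : G -> G) : Prop :=
  (forall y, N y -> N (pi y)) /\
  (forall y y', N y -> N y' -> pi (gmul y y') = gmul (pi y) (pi y')).

(* F^{s,b}(z) = sum_i s_i F^{b_i}(z), written multiplicatively in the
   (abelian) center: prod_i (F^{b_i} z)^{s_i}. *)
Definition Fsum (L H : Grp) (F : L -> H -> H) (n : nat)
    (s : 'I_n -> int) (b : 'I_n -> L) (z : H) : H :=
  foldr (fun i acc => gmul (zpow (F (b i) z) (s i)) acc) gone (enum 'I_n).

(* A tuple (L, N, H, h, h^*, F, (Q^s)) with L and N fixed as parameters.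
   h^* is a map N -> H, encoded as a total map L -> H of which only the
   values on N matter.  Q^s is determined by F and is not stored; it is
   the predicate Q below. *)
Record aut_tuple (L : Grp) (N : L -> Prop) := AutTuple {
  tH  : Grp;
  th  : tH -> L;
  ths : L -> tH;
  tF  : L -> tH -> tH }.

Arguments aut_tuple : clear implicits.
Arguments AutTuple {L N}.
Arguments tH {L N}. Arguments th {L N}. Arguments ths {L N}. Arguments tF {L N}.

Definition Qs L N (c : aut_tuple L N) (n : nat) (s : 'I_n -> int) (b : 'I_n -> L) :=
  forall z : tH c, central z -> Fsum (tF c) s b z = gone.

Definition C2_aut (L : Grp) (N : L -> Prop) (c : aut_tuple L N) : Prop :=
  (forall l, is_aut (tF c l)) /\
  (forall l1 l2 x, tF c (gmul l1 l2) x = tF c l1 (tF c l2 x)) /\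
  (forall l1 l2, (forall x, tF c l1 x = tF c l2 x) -> l1 = l2) /\
  is_normal N /\
  is_hom (th c) /\ (forall x, N (th c x)) /\
  (forall y, N y -> exists x, th c x = y) /\
  (forall x, th c x = gone <-> central x) /\
  (forall a x, tF c (th c a) x = gmul (gmul a x) (ginv a)) /\
  (forall y, N y -> th c (ths c y) = y).

(* H_c is a subset of H_m: encoded by an injective homomorphism
   iota : H_c -> H_m (the inclusion). *)
Definition in_M (L : Grp) (N : L -> Prop) (c m : aut_tuple L N)
    (iota : tH c -> tH m) : Prop :=
  C2_aut m /\
  (is_hom iota /\ injective iota) /\
  (forall x, th m (iota x) = th c x) /\
  (forall y, N y -> ths m y = iota (ths c y)) /\
  (forall l x, tF m l (iota x) = iota (tF c l x)) /\
  (forall n s b, Qs c (n:=n) s b <-> Qs m s b) /\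
  (forall x : tH m, gen_by (fun y => central y \/ exists a, y = iota a) x) /\
  (forall x, central x <-> central (iota x)).

Definition inA (L : Grp) (N : L -> Prop) (c m : aut_tuple L N)
    (iota : tH c -> tH m) (n : nat) (s : 'I_n -> int) (b : 'I_n -> L)
    (pi : L -> L) (g : tH m -> tH m) : Prop :=
  [/\ is_hom g,
      (forall z, central z -> g z = Fsum (tF m) s b z) &
      (forall x, exists z, central z /\
          g x = gmul (iota (ths c (pi (th m x)))) z)].

Arguments in_M {L N} c m iota.
Arguments inA {L N} c m iota {n} s b pi g.

(* Only the group structure of [H_m] matters.  If [f] is a homomorphism with central values, then
   [x |-> g x * f x] is again a homomorphism whenever [g] is; for [g = id]
   and [f \o f = 1] its inverse is [x |-> x * (f x)^-1], since
   [f (f x)^-1 = 1].  Two members [g], [h] of [A^{s,b}_{m,pi}] take values in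
   the same coset of the centre at every [x], so [f := g^-1 h] is a
   centre-valued homomorphism, and it kills the centre because [g] and [h]
   agree there.  Conversely, multiplying [g] by such an [f] preserves all
   three defining conditions of [A^{s,b}_{m,pi}]. *)
From mathcomp Require Import all_boot all_algebra.

Section GroupFacts.
Variable G : Grp.
Implicit Types a x y z : G.

Lemma gmulVr x : gmul x (ginv x) = gone.
Proof.
rewrite -[gmul x (ginv x)]gmul1 -[in gmul gone _](gmulV (ginv x)).
by rewrite -gmulA [gmul (ginv x) _]gmulA gmulV gmul1 gmulV.
Qed.

Lemma gmulr1 x : gmul x gone = x.
Proof. by rewrite -(gmulV x) gmulA gmulVr gmul1. Qed.

Lemma gmulI a x y : gmul a x = gmul a y -> x = y.
Proof. by move/(congr1 (gmul (ginv a))); rewrite !gmulA gmulV !gmul1. Qed.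

Lemma ginv_unique x y : gmul y x = gone -> y = ginv x.
Proof. by move=> yx1; rewrite -[y]gmulr1 -(gmulVr x) gmulA yx1 gmul1. Qed.

Lemma ginv1 : ginv (gone : G) = gone.
Proof. by symmetry; apply: ginv_unique; rewrite gmul1. Qed.

Lemma ginvM x y : ginv (gmul x y) = gmul (ginv y) (ginv x).
Proof.
symmetry; apply: ginv_unique.
by rewrite -gmulA [gmul (ginv x) _]gmulA gmulV gmul1 gmulV.
Qed.

Lemma centralM a b : central a -> central b -> central (gmul a b).
Proof. by move=> ca cb y; rewrite -gmulA cb gmulA ca -gmulA. Qed.

Lemma centralV a : central a -> central (ginv a).
Proof.
move=> ca y; apply: (@gmulI a).
by rewrite gmulA gmulVr gmul1 gmulA ca -gmulA gmulVr gmulr1.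
Qed.

Lemma central_ginv_coset a z1 z2 :
  central z1 -> central z2 -> central (gmul (ginv (gmul a z1)) (gmul a z2)).
Proof.
move=> cz1 cz2; rewrite ginvM -gmulA [gmul (ginv a) _]gmulA gmulV gmul1.
by apply: centralM => //; apply: centralV.
Qed.

End GroupFacts.

Section Homomorphisms.
Variables G K : Grp.

Lemma hom1 (f : G -> K) : is_hom f -> f gone = gone.
Proof. by move=> homf; apply: (@gmulI _ (f gone)); rewrite -homf gmul1 gmulr1. Qed.

Lemma homV (f : G -> K) x : is_hom f -> f (ginv x) = ginv (f x).
Proof. by move=> homf; apply: ginv_unique; rewrite -homf gmulV hom1. Qed.

Lemma is_hom_mul_central (g f : G -> K) :
  is_hom g -> is_hom f -> (forall x, central (f x)) ->
  is_hom (fun x => gmul (g x) (f x)).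
Proof.
move=> homg homf cf x y; rewrite homg homf -!gmulA; congr (gmul (g x) _).
by rewrite !gmulA cf.
Qed.

Lemma is_hom_div_central (g h : G -> K) :
  is_hom g -> is_hom h -> (forall x, central (gmul (ginv (g x)) (h x))) ->
  is_hom (fun x => gmul (ginv (g x)) (h x)).
Proof.
move=> homg homh cgh x y; rewrite homg homh ginvM.
rewrite -gmulA [gmul (ginv (g x)) (gmul _ _)]gmulA.
by rewrite (cgh x (h y)) gmulA (cgh y).
Qed.

End Homomorphisms.

Lemma is_aut_id_mul_central (G : Grp) (f : G -> G) :
  is_hom f -> (forall x, central (f x)) -> (forall x, f (f x) = gone) ->
  is_aut (fun x => gmul x (f x)).
Proof.
move=> homf cf ff1; split; first exact: is_hom_mul_central.
exists (fun x => gmul x (ginv (f x))) => x /=.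
  by rewrite homf ff1 gmulr1 -gmulA gmulVr gmulr1.
by rewrite homf (@homV _ _ f) // ff1 ginv1 gmulr1 -gmulA gmulV gmulr1.
Qed.

Section AutSet.
Variables (L : Grp) (N : L -> Prop) (c m : aut_tuple L N).
Variables (iota : tH c -> tH m) (n : nat) (s : 'I_n -> int) (b : 'I_n -> L).
Variable pi : L -> L.

Lemma inA_mul_central (g f h : tH m -> tH m) :
  inA c m iota s b pi g -> is_hom f -> (forall x, central (f x)) ->
  (forall z, central z -> f z = gone) -> (forall x, h x = gmul (g x) (f x)) ->
  inA c m iota s b pi h.
Proof.
move=> [homg gZ gcoset] homf cf fZ hE; split.
- by move=> x y; rewrite !hE; apply: is_hom_mul_central.
- by move=> z cz; rewrite hE fZ // gmulr1 gZ.
- move=> x; have [z [cz gxE]] := gcoset x.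
  exists (gmul z (f x)); split; first exact: centralM.
  by rewrite hE gxE gmulA.
Qed.

Lemma inA_div_central (g h : tH m -> tH m) :
  inA c m iota s b pi g -> inA c m iota s b pi h ->
  exists f : tH m -> tH m,
    [/\ is_hom f, (forall x, central (f x)),
        (forall z, central z -> f z = gone) &
        (forall x, h x = gmul (g x) (f x))].
Proof.
move=> [homg gZ gcoset] [homh hZ hcoset].
have cgh x : central (gmul (ginv (g x)) (h x)).
  have [z1 [cz1 ->]] := gcoset x; have [z2 [cz2 ->]] := hcoset x.
  exact: central_ginv_coset.
exists (fun x => gmul (ginv (g x)) (h x)); split => //.
- exact: is_hom_div_central.
- by move=> z cz; rewrite gZ // hZ // gmulV.
- by move=> x; rewrite gmulA gmulVr gmul1.
Qed.

End AutSet.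

Theorem proposition3p6 (L : Grp) (N : L -> Prop) (c m : aut_tuple L N)
    (iota : tH c -> tH m) :
  C2_aut c -> in_M c m iota ->
  (* (1) *)
  (forall f : tH m -> tH m,
      is_hom f -> (forall x, central (f x)) ->
      (forall x, f (f x) = gone) ->
      is_aut (fun x => gmul x (f x))) /\
  (* (2) *)
  (forall (n : nat), (0 < n)%N ->
   forall (s : 'I_n -> int) (b : 'I_n -> L) (pi : L -> L),
     is_endo_on N pi ->
     forall g : tH m -> tH m, inA c m iota s b pi g ->
     forall h : tH m -> tH m,
       inA c m iota s b pi h <->
       exists f : tH m -> tH m,
         [/\ is_hom f, (forall x, central (f x)),
             (forall z, central z -> f z = gone) &
             (forall x, h x = gmul (g x) (f x))]).
Proof.
move=> _ _; split; first exact: is_aut_id_mul_central.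
move=> n _ s b pi _ g gA h; split; first exact: inA_div_central.
by case=> f [homf cf fZ hE]; apply: inA_mul_central gA homf cf fZ hE.
Qed.
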